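(* Let $n\ge 2$ and let $G=K_n$ on vertices $v_1,\dots,v_n$ with edge weights $w_{\{i,j\}}\in(0,1)$. Then $\operatorname{eptw}(G)=\frac{1}{1-W}$, where $W=\min_{1\le i\le n}\prod_{j\ne i}(1-w_{\{i,j\}})$.
   Context: Let $G$ be a finite simple graph in which each edge $uv$ has a weight $w_{uv}\in(0,1)$. Weighted zero forcing: start with a set $B\subseteq V(G)$ of blue vertices, all other vertices white. In each round, simultaneously, for every blue vertex $u$ that has exactly one white neighbor $v$ (with respect to the coloring at the start of the round), $u$ attempts to force $v$, succeeding with probability $w_{uv}$, all attempts being independent; a white vertex becomes blue at the end of the round if at least one attempt on it succeeds. $B$ is a weighted zero forcing set of $G$ if this process can eventually color all of $V(G)$ blue (equivalently, $B$ is a zero forcing set of the underlying unweighted graph under the standard rule); $\operatorname{Z}(G)$ is the minimum size of such a set. $\operatorname{ptw}(G,B)$ is the random variable giving the round in which the last white vertex becomes blue ($0$ if $B=V(G)$); $\operatorname{eptw}(G,B)=\mathbb{E}[\operatorname{ptw}(G,B)]$; $\operatorname{eptw}(G)=\min\{\operatorname{eptw}(G,B): B$ a weighted zero forcing set with $|B|=\operatorname{Z}(G)\}$. *)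

From HB Require Import structures.
From mathcomp Require Import all_boot all_order all_algebra.
From mathcomp Require Import all_classical all_reals all_analysis.
Set Implicit Arguments. Unset Strict Implicit. Unset Printing Implicit Defensive.
Import Order.TTheory GRing.Theory Num.Theory.
Local Open Scope ring_scope.

(* A finite simple graph: vertex type V : finType, adjacency e : rel V
   (assumed symmetric and irreflexive where used); edge weights
   w : V -> V -> R (w u v is the weight of edge uv, assumed symmetric). *)

Section ZF.
Variables (V : finType) (e : rel V).

Definition white_nbrs (S : {set V}) (u : V) : {set V} :=
  [set v | e u v & v \notin S].

Definition forces (S : {set V}) (u v : V) : bool :=
  (u \in S) && (white_nbrs S u == [set v]).

Definition zf_step (S : {set V}) : {set V} :=
  S :|: [set v | [exists u, forces S u v]].

Definition zf_closure (B : {set V}) : {set V} := iter #|V| zf_step B.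

Definition is_zfs (B : {set V}) : bool := zf_closure B == [set: V].

Definition Zf : nat := \big[minn/#|V|]_(B : {set V} | is_zfs B) #|B|.

Variables (R : realType) (w : V -> V -> R).

(* probability that the white vertex v is NOT forced in a round starting
   from blue set S (all attempts independent) *)
Definition not_forced (S : {set V}) (v : V) : R :=
  \prod_(u | forces S u v) (1 - w u v).

(* one-round transition probability from blue set S to blue set S' *)
Definition trans (S S' : {set V}) : R :=
  if S \subset S' then
    (\prod_(v in S' :\: S) (1 - not_forced S v)) *
    (\prod_(v in ~: S') not_forced S v)
  else 0.

(* distribution of the blue set at the end of round k, starting from B *)
Fixpoint state_dist (B : {set V}) (k : nat) (S' : {set V}) : R :=
  match k with
  | 0 => (S' == B)%:R
  | k.+1 => \sum_(S : {set V}) state_dist B k S * trans S S'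
  end.

(* P(ptw(G,B) <= k) : V(G) is absorbing *)
Definition ptw_le (B : {set V}) (k : nat) : R := state_dist B k [set: V].

Definition ptw_eq (B : {set V}) (k : nat) : R :=
  ptw_le B k - (if k is k'.+1 then ptw_le B k' else 0).

Definition eptw_set (B : {set V}) : \bar R :=
  (\sum_(0 <= k <oo) ((k%:R * ptw_eq B k)%:E))%E.

Definition eptw : \bar R :=
  \big[Order.min/+oo%E]_(B : {set V} | is_zfs B && (#|B| == Zf)) eptw_set B.

End ZF.

Definition Kn_adj (n : nat) : rel 'I_n := fun i j => i != j.

From HB Require Import structures.
From mathcomp Require Import all_boot all_order all_algebra.
From mathcomp Require Import all_classical all_reals all_analysis.
From mathcomp Require Import ring lra zify.
Set Implicit Arguments. Unset Strict Implicit. Unset Printing Implicit Defensive.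
Import Order.TTheory GRing.Theory Num.Theory.
Import numFieldNormedType.Exports.
Local Open Scope ring_scope.

(* On K_n a blue vertex sees every white vertex, so it can force only when
   exactly one vertex is white.  Hence the zero forcing sets of K_n are the
   sets with at most one white vertex, Z(K_n) = n - 1, and the minimum zero
   forcing sets are the co-singletons ~: [set v].  Starting from ~: [set v],
   each round independently either leaves v white, with probability
   survival v = prod_(u != v) (1 - w u v), or finishes the process, so the
   propagation time is geometric and its mean is 1 / (1 - survival v).
   Minimising over v, and using that x |-> 1 / (1 - x) is increasing below 1,
   gives eptw(K_n) = 1 / (1 - min_v survival v). *)

Section GeometricMean.
Variables (R : realType) (q : R).
Local Open Scope classical_set_scope.
Hypothesis q_ge0 : 0 <= q.
Hypothesis q_lt1 : q < 1.

(* P(T = k) for the first success time T of independent trials that each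
   fail with probability q *)
Definition geom_pmf (k : nat) : R :=
  if k is k'.+1 then q ^+ k' * (1 - q) else 0.

Let mean_partial (N : nat) : R := \sum_(0 <= k < N) k%:R * geom_pmf k.

Let compl_q_gt0 : 0 < 1 - q. Proof. by rewrite subr_gt0. Qed.

Lemma mean_partial_rec (N : nat) :
  mean_partial N.+1 = q * mean_partial N + 1 - q ^+ N.
Proof.
rewrite /mean_partial; elim: N => [|N IH].
  by rewrite big_nat1 big_geq // /geom_pmf !mul0r mulr0 add0r expr0 subrr.
rewrite [in RHS]big_nat_recr //= [in LHS]big_nat_recr //= IH /geom_pmf.
by case: N {IH} => [|N]; rewrite ?mul0r ?addr0 ?expr0 ?exprS; ring.
Qed.

Lemma mean_partial_le (N : nat) : mean_partial N <= (1 - q)^-1.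
Proof.
elim: N => [|N IH]; first by rewrite /mean_partial big_geq // invr_ge0 ltW.
have qN_ge0 : 0 <= q ^+ N by exact: exprn_ge0.
have qS : q * mean_partial N <= q * (1 - q)^-1 by exact: ler_wpM2l.
have inv_eq : (1 - q)^-1 = q * (1 - q)^-1 + 1 by field; rewrite lt0r_neq0.
rewrite mean_partial_rec; lra.
Qed.

Lemma mean_partial_cvg : mean_partial @ \oo --> (1 - q)^-1.
Proof.
have mean_partial_nd : nondecreasing_seq mean_partial.
  apply/nondecreasing_seqP => N; rewrite /mean_partial big_nat_recr //= lerDl.
  rewrite /geom_pmf; case: N => [|N]; first by rewrite mulr0.
  by rewrite mulr_ge0 // mulr_ge0 ?exprn_ge0 // ltW.
have cvg_partial : cvgn mean_partial.
  apply: (nondecreasing_is_cvgn mean_partial_nd).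
  by exists (1 - q)^-1 => _ [N _ <-]; exact: mean_partial_le.
set L := limn mean_partial.
(* passing to the limit in the recursion gives L = q * L + 1 *)
have rec_lim : (fun N => q * mean_partial N + 1 - q ^+ N) @ \oo --> q * L + 1 - 0.
  apply: cvgB; first by apply: cvgD; [exact: cvgMl_tmp | exact: cvg_cst].
  by apply: cvg_expr; rewrite ger0_norm.
have shift_lim : (fun N => mean_partial N.+1) @ \oo --> L by rewrite cvg_shiftS.
have rec_eq : (fun N => mean_partial N.+1) = (fun N => q * mean_partial N + 1 - q ^+ N).
  by apply: funext => N; rewrite mean_partial_rec.
rewrite rec_eq in shift_lim.
have fixL : L = q * L + 1.
  by have := cvg_unique _ shift_lim rec_lim; rewrite subr0; apply.
have -> : (1 - q)^-1 = L.
  by apply: (mulIf (lt0r_neq0 compl_q_gt0)); rewrite mulVf ?lt0r_neq0 //; lra.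
exact: cvg_partial.
Qed.

Lemma geom_mean :
  (\sum_(0 <= k <oo) ((k%:R * geom_pmf k)%:E))%E = ((1 - q)^-1)%:E.
Proof.
have -> : (fun N => \sum_(0 <= k < N) ((k%:R * geom_pmf k)%:E))%E
          = EFin \o mean_partial by apply: funext => N; rewrite /= sumEFin.
rewrite EFin_lim; last by apply/cvg_ex; exists (1 - q)^-1; exact: mean_partial_cvg.
by rewrite (cvg_lim _ mean_partial_cvg).
Qed.

End GeometricMean.

Import mathcomp.boot.fintype mathcomp.boot.finset.

Lemma trans_setT (V : finType) (e : rel V) (R : realType) (w : V -> V -> R)
    (S' : {set V}) :
  trans e w [set: V] S' = (S' == [set: V])%:R.
Proof.
rewrite /trans subTset; case: eqP => [->|] //=.
by rewrite setDv setCT !big_set0 mulr1.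
Qed.

Lemma supset_setC1 (T : finType) (x : T) (S : {set T}) :
  ~: [set x] \subset S -> S = ~: [set x] \/ S = [set: T].
Proof.
move=> /subsetP sub.
have in_S y : y != x -> y \in S by move=> yx; apply: sub; rewrite !inE.
case: (boolP (x \in S)) => xS; [right|left]; apply/setP => y; rewrite !inE.
  by case: (eqVneq y x) => [->|/in_S].
by case: (eqVneq y x) => [->|/in_S]; rewrite ?(negbTE xS).
Qed.

Lemma setC1_neqT (T : finType) (x : T) : (~: [set x] == [set: T]) = false.
Proof. by apply/negbTE/eqP => /setP /(_ x); rewrite !inE eqxx. Qed.

Section CompleteGraph.
Variable n : nat.
Local Notation K := (@Kn_adj n).

Lemma white_nbrs_Kn (S : {set 'I_n}) (u : 'I_n) :
  u \in S -> white_nbrs K S u = ~: S.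
Proof.
move=> uS; apply/setP => v; rewrite !inE /Kn_adj.
by case: (eqVneq u v) => [<-|]; rewrite ?uS.
Qed.

Lemma forces_Kn (S : {set 'I_n}) (u v : 'I_n) :
  forces K S u v = (u \in S) && (~: S == [set v]).
Proof. by rewrite /forces; case: (boolP (u \in S)) => // /white_nbrs_Kn ->. Qed.

Lemma exists_other (v : 'I_n) : (2 <= n)%N -> exists u : 'I_n, u != v.
Proof.
move=> hn; have : (0 < #|~: [set v]|)%N by rewrite cardsC1 card_ord -ltnS prednK // ltnW.
by case/card_gt0P => u; rewrite !inE; exists u.
Qed.

Lemma zf_step_stuck (S : {set 'I_n}) : (1 < #|~: S|)%N -> zf_step K S = S.
Proof.
move=> white2; apply/setP => v; rewrite !inE orb_idr // => /existsP [u].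
by rewrite forces_Kn => /andP [_ /eqP white1]; move: white2; rewrite white1 cards1.
Qed.

Lemma zf_step_setC1 (v : 'I_n) : (2 <= n)%N -> zf_step K (~: [set v]) = [set: 'I_n].
Proof.
move=> hn; apply/setP => x; rewrite !inE; case: (eqVneq x v) => [->|] //=.
have [u uv] := exists_other v hn.
by apply/existsP; exists u; rewrite forces_Kn setCK !inE uv eqxx.
Qed.

Lemma is_zfs_Kn (S : {set 'I_n}) : (2 <= n)%N -> is_zfs K S = (#|~: S| <= 1)%N.
Proof.
move=> hn; rewrite /is_zfs /zf_closure card_ord.
have stepT : zf_step K [set: 'I_n] = [set: 'I_n] by rewrite /zf_step setTU.
have [white_le1|white2] := leqP #|~: S| 1; last first.
  rewrite iter_fix ?zf_step_stuck //; apply/negbTE/eqP => ST.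
  by move: white2; rewrite ST setCT cards0.
move: white_le1; rewrite leq_eqVlt ltnS leqn0 cards_eq0.
case/orP => [/cards1P [v white_v]|/eqP white0].
  have -> : S = ~: [set v] by rewrite -white_v setCK.
  by rewrite -[X in iter X](prednK (ltnW hn)) iterSr zf_step_setC1 // iter_fix ?eqxx.
have -> : S = [set: 'I_n] by rewrite -setC0 -white0 setCK.
by rewrite iter_fix ?eqxx.
Qed.

Lemma Zf_Kn : (2 <= n)%N -> Zf K = n.-1.
Proof.
move=> hn; rewrite /Zf card_ord -minEnat; apply/anti_leq/andP; split.
  pose v0 : 'I_n := Ordinal (ltnW hn).
  have zfs_v0 : is_zfs K (~: [set v0]) by rewrite is_zfs_Kn // setCK cards1.
  have := bigmin_le_cond n (fun B : {set 'I_n} => #|B|) zfs_v0.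
  by rewrite leEnat cardsC1 card_ord.
rewrite -leEnat; apply/bigmin_geP; split; first by rewrite leEnat leq_pred.
by move=> S; rewrite leEnat is_zfs_Kn // (cardsCs S) card_ord -subn1; exact: leq_sub2l.
Qed.

Lemma min_zfs_Kn (S : {set 'I_n}) : (2 <= n)%N ->
  (is_zfs K S && (#|S| == Zf K)) = (S \in [set ~: [set v] | v in [set: 'I_n]]).
Proof.
move=> hn; rewrite Zf_Kn // is_zfs_Kn //; apply/idP/imsetP.
  case/andP => _ /eqP cardS; have : #|~: S| == 1%N.
    by move: (cardsC S); rewrite card_ord cardS -subn1; lia.
  by case/cards1P => v /(congr1 (@setC _)); rewrite setCK => ->; exists v.
by case => v _ ->; rewrite setCK cards1 cardsC1 card_ord eqxx.
Qed.

Variables (R : realType) (w : 'I_n -> 'I_n -> R).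

Definition survival (v : 'I_n) : R := \prod_(u | u != v) (1 - w u v).

Lemma not_forced_setC1 (v : 'I_n) : not_forced K w (~: [set v]) v = survival v.
Proof. by apply: eq_bigl => u; rewrite forces_Kn setCK eqxx !inE andbT. Qed.

Lemma trans_setC1 (v : 'I_n) (S' : {set 'I_n}) :
  trans K w (~: [set v]) S' =
  survival v * (S' == ~: [set v])%:R + (1 - survival v) * (S' == [set: 'I_n])%:R.
Proof.
rewrite /trans; case: ifP => [/supset_setC1 [] ->|sub].
- rewrite eqxx setC1_neqT setDv big_set0 setCK big_set1 not_forced_setC1.
  by rewrite mul1r mulr1 mulr0 addr0.
- rewrite eqxx eq_sym setC1_neqT setTD setCK big_set1 setCT big_set0 not_forced_setC1.
  by rewrite !mulr1 mulr0 add0r.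
have S'v : (S' == ~: [set v]) = false by apply: contraFF sub => /eqP ->.
have S'T : (S' == [set: 'I_n]) = false by apply: contraFF sub => /eqP ->; exact: subsetT.
by rewrite S'v S'T !mulr0 addr0.
Qed.

Lemma state_dist_setC1 (v : 'I_n) (k : nat) (S' : {set 'I_n}) :
  state_dist K w (~: [set v]) k S' =
  survival v ^+ k * (S' == ~: [set v])%:R
  + (1 - survival v ^+ k) * (S' == [set: 'I_n])%:R.
Proof.
elim: k S' => [|k IH] S' /=; first by rewrite expr0 mul1r subrr mul0r addr0.
rewrite (bigD1 (~: [set v])) // (bigD1 [set: 'I_n]) /=; last by rewrite eq_sym setC1_neqT.
rewrite big1 => [|S /andP [Sv ST]]; last first.
  by rewrite IH (negbTE Sv) (negbTE ST) !mulr0 addr0 mul0r.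
rewrite !IH eqxx setC1_neqT eq_sym setC1_neqT eqxx trans_setC1 trans_setT exprS.
by rewrite !mulr1 !mulr0 !addr0 add0r; ring.
Qed.

Lemma ptw_eq_setC1 (v : 'I_n) (k : nat) :
  ptw_eq K w (~: [set v]) k = geom_pmf (survival v) k.
Proof.
rewrite /ptw_eq /ptw_le /geom_pmf.
case: k => [|k]; rewrite !state_dist_setC1 eq_sym setC1_neqT eqxx !mulr0 !add0r !mulr1.
  by rewrite expr0 subrr subr0.
by rewrite exprS; ring.
Qed.

(* survival v is a product of factors 1 - w u v in [0, 1], and since n >= 2
   at least one of them is < 1 *)
Lemma survival_bounds (v : 'I_n) : (2 <= n)%N ->
  (forall i j, i != j -> 0 < w i j < 1) -> 0 <= survival v < 1.
Proof.
move=> hn hw; have factor_bounds u : u != v -> 0 <= 1 - w u v <= 1.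
  by move=> /hw /andP [w_gt0 w_lt1]; rewrite subr_ge0 lerBlDr lerDl !ltW.
have [u uv] := exists_other v hn.
have /andP [wuv_gt0 _] := hw _ _ uv.
rewrite /survival (bigD1 u) //=.
have /andP [rest_ge0 rest_le1] : 0 <= \prod_(j | (j != v) && (j != u)) (1 - w j v) <= 1.
  apply/andP; split; first by apply: prodr_ge0 => j /andP [/factor_bounds /andP []].
  by apply: prodr_ile1 => j /andP [/factor_bounds].
have /andP [fu_ge0 _] := factor_bounds u uv.
rewrite mulr_ge0 //=; apply: le_lt_trans (_ : 1 - w u v < 1).
  by rewrite -[leRHS]mulr1 ler_wpM2l.
by rewrite ltrBlDr ltrDl.
Qed.

Lemma eptw_set_setC1 (v : 'I_n) : 0 <= survival v -> survival v < 1 ->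
  eptw_set K w (~: [set v]) = ((1 - survival v)^-1)%:E.
Proof.
move=> surv_ge0 surv_lt1; rewrite /eptw_set -(geom_mean surv_ge0 surv_lt1).
have -> // : ptw_eq K w (~: [set v]) = geom_pmf (survival v).
by apply: funext => k; exact: ptw_eq_setC1.
Qed.

End CompleteGraph.

(* x |-> 1 / (1 - x) is increasing below 1, so it commutes with finite minima *)
Lemma bigmin_inv_compl (R : realType) (I : finType) (i0 : I) (q : I -> R) :
  (forall i, q i < 1) ->
  \big[Order.min/+oo%E]_(i in [set: I]) ((1 - q i)^-1)%:E
  = ((1 - \big[Num.min/1]_i q i)^-1)%:E.
Proof.
move=> q_lt1.
have [i1 _ min_i1] := @eq_bigmin _ _ I 1 i0 predT q isT (fun i _ => ltW (q_lt1 i)).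
rewrite min_i1; apply/eqP; rewrite eq_le; apply/andP; split.
  by apply: bigmin_le_cond; rewrite inE.
apply/bigmin_geP; split => [|i _]; first exact: leey.
rewrite lee_fin lef_pV2 ?posrE ?subr_gt0 // lerB // -min_i1; exact: bigmin_le.
Qed.

Theorem mainTheorem2 (R : realType) (n : nat) (w : 'I_n -> 'I_n -> R)
  (hn : (2 <= n)%N)
  (hsym : forall i j, w i j = w j i)
  (hw : forall i j, i != j -> 0 < w i j < 1) :
  eptw (@Kn_adj n) w =
  ((1 - \big[Num.min/1]_(i < n) \prod_(j < n | j != i) (1 - w i j))^-1)%:E.
Proof.
have survivalE v : survival w v = \prod_(j < n | j != v) (1 - w v j).
  by apply: eq_bigr => u _; rewrite hsym.
have /all_and2 [surv_ge0 surv_lt1] v := andP (survival_bounds v hn hw).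
rewrite /eptw (eq_bigl _ _ (fun B => min_zfs_Kn B hn)) bigmin_imset.
under eq_bigr => v _ do rewrite eptw_set_setC1 // survivalE.
by apply: (bigmin_inv_compl (Ordinal (ltnW hn))) => v; rewrite -survivalE.
Qed.
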